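(* Let $T$ be a tree with $k$ vertices and $t:=\sigma(T)-1$. Let $\mathcal{H}$ be a $3$-graph on vertex set $V$, let $S_1,S_2\subseteq V$ be two distinct $t$-subsets, and let $V_1,V_2\subseteq V\setminus(S_1\cup S_2)$ be two sets with $V_1\cap V_2\ne\emptyset$. Suppose there are graphs $G_1$ on $V_1$ and $G_2$ on $V_2$ such that for each $i\in\{1,2\}$: (i) $d_{G_i}(v)\ge 3k$ for all $v\in V_i$, and (ii) $G_i\subseteq L_{\mathcal{H}}(v)$ for all $v\in S_i$. Then $\mathcal{H}$ contains a copy of $T^3$.
   Context: For a graph $F$, $|F|$ is its number of edges and $F-I$ the subgraph induced on $V(F)\setminus I$; $\sigma(F)=\min\{|I|+|F-I| : I\text{ independent in }F\}$. For a $3$-graph $\mathcal{H}$, the link of a vertex $v$ is the graph $L_{\mathcal{H}}(v)=\{uw: uvw\in\mathcal{H}\}$. The expansion $T^3$ is the $3$-graph obtained from $T$ by adding to each edge a new vertex, distinct edges receiving distinct new vertices. *)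

From mathcomp Require Import all_boot.
Set Implicit Arguments. Unset Strict Implicit. Unset Printing Implicit Defensive.

Definition is_graph (U : finType) (E : {set {set U}}) : Prop :=
  forall e, e \in E -> #|e| = 2.

Definition adj (U : finType) (E : {set {set U}}) : rel U :=
  fun x y => (x != y) && ([set x; y] \in E).

Definition gconnected (U : finType) (E : {set {set U}}) : Prop :=
  forall x y : U, connect (adj E) x y.

Definition acyclic (U : finType) (E : {set {set U}}) : Prop :=
  forall c : seq U, uniq c -> 2 < size c -> ~~ cycle (adj E) c.

Definition is_tree (U : finType) (E : {set {set U}}) : Prop :=
  [/\ is_graph E, 0 < #|U|, gconnected E & acyclic E].

Definition independent (U : finType) (E : {set {set U}}) (I : {set U}) : bool :=
  [forall e in E, ~~ (e \subset I)].

Definition edges_outside (U : finType) (E : {set {set U}}) (I : {set U}) : nat :=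
  #|[set e in E | [disjoint e & I]]|.

Definition sigma (U : finType) (E : {set {set U}}) : nat :=
  \big[minn/#|E|]_(I : {set U} | independent E I) (#|I| + edges_outside E I).

Definition is_3graph (V : finType) (H : {set {set V}}) : Prop :=
  forall e, e \in H -> #|e| = 3.

Definition link (V : finType) (H : {set {set V}}) (v : V) : {set {set V}} :=
  [set e : {set V} | [&& #|e| == 2, v \notin e & v |: e \in H]].

Definition deg (V : finType) (G : {set {set V}}) (v : V) : nat :=
  #|[set e in G | v \in e]|.

(* H contains a copy of the expansion T^3 of the graph (U, E):
   an injective vertex map phi, and an injective choice psi of new vertices
   (outside the image of phi) for the edges, such that each expanded edge
   phi(x) phi(y) psi(xy) is an edge of H. *)
Definition contains_expansion (U V : finType) (E : {set {set U}})
    (H : {set {set V}}) : Prop :=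
  exists (phi : U -> V) (psi : {set U} -> V),
    [/\ injective phi,
        {in E &, injective psi},
        (forall e, e \in E -> forall x : U, psi e != phi x) &
        (forall e, e \in E -> psi e |: (phi @: e) \in H)].

From mathcomp Require Import all_boot.
Set Implicit Arguments. Unset Strict Implicit. Unset Printing Implicit Defensive.

(* Fix an independent set I of T with sigma(T) = |I| + |T - I|. Its pieces, namely the
   singletons {u} with u in I and the edges of T missing I, are at most t + 1 in number,
   so one piece P0 can be given the centre s2 in S2 \ S1 and the others distinct centres
   in S1. Embed T greedily along a rooted order whose root goes to a vertex of V1 and V2:
   a vertex of I goes to the centre of its piece, an edge missing I is expanded by its
   own centre, and every other image is a fresh neighbour in G2 (for the edges of P0) or
   in G1 (for the others); fresh neighbours exist because at most 2k vertices are ever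
   used. Every edge of T then becomes a triple {centre, a, b} with ab in G_i, a subgraph
   of the link of the centre. Choosing P0 and the root next to a deepest leaf makes the
   root the only vertex outside I whose edges need both G1 and G2. *)

Lemma exists_notin_seq (T : finType) (s : seq T) :
  uniq s -> size s < #|T| -> exists x, x \notin s.
Proof.
move=> s_uniq s_small; apply/existsP; apply: contraTT s_small => /existsPn s_all.
by rewrite -leqNgt cardE uniq_leq_size ?enum_uniq // => x _; apply/negbNE/s_all.
Qed.

Lemma index_rcons_mem (T : eqType) (s : seq T) x y : x \in s -> index x (rcons s y) = index x s.
Proof. by move=> xs; rewrite -cats1 index_cat xs. Qed.

Lemma index_rcons_new (T : eqType) (s : seq T) y : y \notin s -> index y (rcons s y) = size s.
Proof. by move=> ys; rewrite -cats1 index_cat (negbTE ys) /= eqxx addn0. Qed.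

Lemma mem_of_index_lt (T : eqType) (s : seq T) x y : index y s < index x s -> y \in s.
Proof. by move=> yx; rewrite -index_mem (leq_trans yx) ?index_size. Qed.

Lemma exists_notin_of_card (T : finType) (A B : {set T}) :
  #|A| = #|B| -> A != B -> exists2 b, b \in B & b \notin A.
Proof.
move=> AB_card AB; apply/subsetPn; apply: contra AB => BA.
by rewrite eq_sym eqEcard BA AB_card leqnn.
Qed.

Lemma exists_inj_pinned (T1 T2 : finType) (A : {set T1}) (B : {set T2}) a0 b0 :
  a0 \in A -> b0 \notin B -> #|A| <= #|B|.+1 ->
  exists f : T1 -> T2, [/\ {in A &, injective f}, f a0 = b0,
    forall a, a \in A -> a != a0 -> f a \in B & forall a, f a \in b0 |: B].
Proof.
move=> a0A b0B A_small; pose s := enum (A :\ a0).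
pose f a := if a == a0 then b0 else nth b0 (enum B) (index a s).
have s_small : size s <= size (enum B).
  by move: A_small; rewrite -!cardE (cardsD1 a0 A) a0A add1n ltnS.
have s_mem a : a \in A -> a != a0 -> a \in s by move=> aA aa0; rewrite mem_enum !inE aa0.
have index_lt a : a \in A -> a != a0 -> index a s < size (enum B).
  by move=> aA aa0; rewrite (leq_trans _ s_small) // index_mem s_mem.
have f_in a : a \in A -> a != a0 -> f a \in B.
  by move=> aA aa0; rewrite /f (negbTE aa0) -mem_enum mem_nth ?index_lt.
exists f; split=> //; last first.
- move=> a; rewrite /f; case: eqP => _; rewrite !inE ?eqxx // -mem_enum.
  case: (ltnP (index a s) (size (enum B))) => [i_lt|i_ge]; first by rewrite mem_nth ?orbT.
  by rewrite nth_default ?eqxx.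
- by rewrite /f eqxx.
move=> a a' aA a'A; have [->|aa0] := eqVneq a a0; have [->|a'a0] := eqVneq a' a0 => //.
- by move=> b0_fa'; move: (f_in a' a'A a'a0); rewrite -b0_fa' /f eqxx (negbTE b0B).
- by move=> fa_b0; move: (f_in a aA aa0); rewrite fa_b0 /f eqxx (negbTE b0B).
rewrite /f (negbTE aa0) (negbTE a'a0) => /eqP; rewrite nth_uniq ?enum_uniq ?index_lt //.
by move/eqP; apply: (index_inj a); [apply: (s_mem a aA aa0) | apply: (s_mem a' a'A a'a0)].
Qed.

Section Adjacency.
Variables (U : finType) (E : {set {set U}}).

Lemma adjC x y : adj E x y = adj E y x.
Proof. by rewrite /adj eq_sym setUC. Qed.

Lemma adj_edge x y : adj E x y -> [set x; y] \in E.
Proof. by case/andP. Qed.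

Lemma graph_edgeP e : is_graph E -> e \in E ->
  exists x y, e = [set x; y] /\ adj E x y.
Proof.
move=> gE eE; have /eqP/cards2P[x [y [xy exy]]] := gE e eE.
by exists x, y; split; rewrite // /adj xy -exy eE.
Qed.

Lemma edge_eq_set2 e x y : is_graph E -> e \in E -> x \in e -> y \in e -> x != y ->
  e = [set x; y].
Proof.
move=> gE eE xe ye xy; apply/eqP.
by rewrite eq_sym eqEcard subUset !sub1set xe ye cards2 xy (gE e eE).
Qed.

Lemma adj_of_edge e x y : is_graph E -> e \in E -> x \in e -> y \in e -> x != y ->
  adj E x y.
Proof. by move=> gE eE xe ye xy; rewrite /adj xy -(edge_eq_set2 gE eE xe ye xy). Qed.

Lemma edge_neq_set1 e u : is_graph E -> e \in E -> e != [set u].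
Proof. by move=> gE eE; apply: contra_eqN (gE e eE) => /eqP->; rewrite cards1. Qed.

Definition adj_in (A : {pred U}) : rel U :=
  [rel a b | [&& adj E a b, a \in A & b \in A]].

Lemma adj_in_sym A : connect_sym (adj_in A).
Proof.
apply: sym_connect_sym => a b.
by rewrite /adj_in /= adjC; case: (a \in A); case: (b \in A); rewrite ?andbF.
Qed.

Lemma path_adj_in A x p : path (adj_in A) x p -> path (adj E) x p /\ all (mem A) p.
Proof.
elim: p x => //= a p IH x /andP[/and3P[xa _ aA] /IH[pa pA]].
by rewrite xa aA pa pA.
Qed.

Lemma neighbours_not_connected_in (A : {pred U}) y x1 x2 :
  acyclic E -> y \notin A -> x1 \in A -> x1 != x2 -> adj E y x1 -> adj E y x2 ->
  ~~ connect (adj_in A) x1 x2.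
Proof.
move=> acE yA x1A x12 yx1 yx2; apply/negP => /connectP[p p_path p_last].
case: (shortenP p_path) p_last => q q_path q_uniq _ q_last.
have [q_adj q_in] := path_adj_in q_path.
have y_notin : y \notin x1 :: q.
  rewrite inE negb_or; apply/andP; split; first by apply: contraNneq yA => ->.
  by apply: contra yA => yq; apply: (allP q_in).
case: q q_path q_uniq q_adj q_in y_notin q_last => [|b q] _ q_uniq q_adj _ y_notin q_last.
  by move: x12; rewrite q_last eqxx.
have := acE (y :: x1 :: b :: q); rewrite cons_uniq y_notin q_uniq => /(_ isT isT).
move: q_adj; rewrite /= rcons_path yx1 => /andP[-> ->].
by rewrite /= -[last b q]/(last x1 (b :: q)) -q_last adjC yx2.
Qed.

End Adjacency.

Lemma exists_fresh_neighbour (V : finType) (G : {set {set V}}) v (X : {set V}) :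
  is_graph G -> #|X| < deg G v -> exists2 a, a \notin X & [set v; a] \in G.
Proof.
move=> gG X_small; pose N := [set a | [set v; a] \in G].
have N_big : #|X| < #|N|.
  apply: leq_trans X_small (leq_trans _ (leq_imset_card (fun a => [set v; a]) N)).
  apply/subset_leq_card/subsetP => e; rewrite inE => /andP[eG ve].
  have [x [y [exy _]]] := graph_edgeP gG eG; subst e.
  move: ve; rewrite !inE => /orP[]/eqP vxy; subst v; apply/imsetP.
    by exists y; rewrite // inE.
  by exists x; rewrite 1?setUC // inE setUC.
have /subsetPn[a aN aX] : ~~ (N \subset X).
  by apply: contraTN N_big => /subset_leq_card; rewrite leqNgt.
by exists a; rewrite // inE in aN.
Qed.

Lemma link_triple (V : finType) (H G : {set {set V}}) s a b :
  G \subset link H s -> [set a; b] \in G -> s |: [set a; b] \in H.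
Proof. by move=> /subsetP GH /GH; rewrite inE => /and3P[]. Qed.

Lemma exists_adj_across (U : finType) (E : {set {set U}}) (A : {pred U}) a b :
  gconnected E -> a \in A -> b \notin A ->
  exists x y, [/\ x \in A, y \notin A & adj E x y].
Proof.
move=> cE aA bA; have /connectP[p p_path b_last] := cE a b.
elim: p a aA p_path b_last => [|c p IH] a aA /=; first by move=> _ ba; rewrite ba aA in bA.
case/andP=> ac c_path b_last; have [cA|cA] := boolP (c \in A); first exact: IH c_path b_last.
by exists a, c.
Qed.

(** * Rooted orders of trees *)

Section RootedOrder.
Variables (U : finType) (E : {set {set U}}) (r : U).

Record rooted_order (rank : U -> nat) (par : U -> U) : Prop := RootedOrder {
  rank_inj : injective rank;
  rank_root : rank r = 0;
  rank_lt_card x : rank x < #|U|;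
  adj_par x : x != r -> adj E x (par x);
  rank_par x : x != r -> rank (par x) < rank x;
  par_unique x y : adj E x y -> rank y < rank x -> y = par x }.

Definition rooted_seq (s : seq U) :=
  [/\ uniq s, r \in s, index r s = 0 &
      forall x, x \in s -> x != r -> exists2 y, adj E x y & index y s < index x s].

Lemma rooted_seq_connect s k x : rooted_seq s -> x \in s -> index x s < k ->
  connect (adj_in E [pred y | index y s < k]) r x.
Proof.
case=> _ _ _ earlier; elim: {x}(index x s) {-2}x (leqnn (index x s)) => [|m IH] x.
  rewrite leqn0 => /eqP x0 xs _; suff -> : x = r by [].
  by apply/eqP; apply: contraT => /(earlier x xs)[y _]; rewrite x0.
move=> xm xs xk; have [->|xr] := eqVneq x r; first exact: connect0.
have [y xy yx] := earlier x xs xr.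
have yrec : connect (adj_in E [pred y | index y s < k]) r y.
  by apply: IH (mem_of_index_lt yx) (ltn_trans yx xk); rewrite -ltnS (leq_trans yx).
apply: connect_trans yrec (connect1 _).
by rewrite /adj_in /= adjC xy !inE xk (ltn_trans yx xk).
Qed.

Lemma rooted_seq_par_unique s x y z : acyclic E -> rooted_seq s -> x \in s ->
  adj E x y -> adj E x z -> index y s < index x s -> index z s < index x s -> y = z.
Proof.
move=> acE rs xs xy xz yx zx; apply/eqP/negPn/negP => yz.
have xA : x \notin [pred u | index u s < index x s] by rewrite inE ltnn.
have /negP[] := neighbours_not_connected_in acE xA yx yz xy xz.
have path_r u : index u s < index x s ->
    connect (adj_in E [pred u | index u s < index x s]) r u.
  by move=> ux; apply: rooted_seq_connect rs (mem_of_index_lt ux) ux.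
by apply: connect_trans (path_r z zx); rewrite adj_in_sym; apply: path_r.
Qed.

Lemma rooted_seq_extend s : gconnected E -> rooted_seq s -> size s < #|U| ->
  exists2 s', rooted_seq s' & size s' = (size s).+1.
Proof.
move=> cE [s_uniq rs r0 earlier] s_small.
have [z zs] := exists_notin_seq s_uniq s_small.
have [x [y [xs ys xy]]] := exists_adj_across cE (A := mem s) rs zs.
exists (rcons s y); last by rewrite size_rcons.
split; first by rewrite rcons_uniq ys s_uniq.
- by rewrite mem_rcons inE rs orbT.
- by rewrite index_rcons_mem.
move=> u; rewrite mem_rcons inE => /orP[/eqP->|us] ur.
  by exists x; rewrite 1?adjC // index_rcons_new // index_rcons_mem // index_mem.
have [v uv vu] := earlier u us ur.
by exists v; rewrite // !index_rcons_mem // (mem_of_index_lt vu).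
Qed.

Hypothesis tE : is_tree E.

Lemma exists_full_rooted_seq : exists2 s, rooted_seq s & size s = #|U|.
Proof.
case: tE => _ U_gt0 cE _.
suff grow n : n < #|U| -> exists2 s, rooted_seq s & size s = n.+1.
  by rewrite -(prednK U_gt0); apply: grow; rewrite ltn_predL.
elim: n => [_|n IH n_small].
  exists [:: r] => //; split; rewrite /= ?inE ?eqxx //.
  by move=> x; rewrite inE => ->.
have [s rs sn] := IH (ltnW n_small).
have s_small : size s < #|U| by rewrite sn.
have [s' rs' s's] := rooted_seq_extend cE rs s_small.
by exists s'; rewrite // s's sn.
Qed.

Lemma exists_rooted_order : exists rank par, rooted_order rank par.
Proof.
case: tE => _ _ _ acE; have [s rs s_size] := exists_full_rooted_seq.
case: (rs) => s_uniq _ r0 earlier.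
have s_all x : x \in s.
  apply/negPn/negP => xs; have := max_card (mem (x :: s)).
  by rewrite (card_uniqP _) /= ?xs // s_size ltnn.
pose par x := odflt x [pick y | adj E x y && (index y s < index x s)].
have par_spec x : x != r -> adj E x (par x) && (index (par x) s < index x s).
  move=> xr; rewrite /par; case: pickP => [y //|none].
  by have [y xy yx] := earlier x (s_all x) xr; move: (none y); rewrite xy yx.
exists (index ^~ s), par; split => //.
- by move=> x y; apply: index_inj; rewrite ?s_all.
- by move=> x; rewrite -s_size index_mem.
- by move=> x /par_spec/andP[].
- by move=> x /par_spec/andP[].
move=> x y xy yx; have xr : x != r by apply: contraTneq yx => ->; rewrite r0.
by have /andP[xp px] := par_spec x xr; apply: (rooted_seq_par_unique acE rs (s_all x)).
Qed.

End RootedOrder.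

Section RootedOrderTheory.
Variables (U : finType) (E : {set {set U}}) (r : U) (rank : U -> nat) (par : U -> U).
Hypothesis ro : rooted_order E r rank par.

Lemma rank_onto n : n < #|U| -> exists x, rank x = n.
Proof.
move=> n_small; pose f x : 'I_#|U| := Ordinal (rank_lt_card ro x).
have f_inj : injective f by move=> x y /(congr1 val) /(rank_inj ro).
have := inj_card_onto f_inj (eq_leq (card_ord _)) (Ordinal n_small).
by case/codomP=> x /(congr1 val) /= nx; exists x.
Qed.

Lemma neq_root_of_rank x y : rank y < rank x -> x != r.
Proof. by move=> yx; apply: contraTneq yx => ->; rewrite (rank_root ro). Qed.

Lemma adj_rank_lt x y : adj E x y -> (rank x < rank y) || (rank y < rank x).
Proof. by move=> xy; rewrite -neq_ltn (inj_eq (rank_inj ro)); case/andP: xy. Qed.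

Lemma par_of_rank_lt x y : adj E x y -> rank x < rank y -> x = par y /\ y != r.
Proof. by move=> xy xy_lt; rewrite (neq_root_of_rank xy_lt) -(par_unique ro _ xy_lt) // adjC. Qed.

Lemma edge_par e : is_graph E -> e \in E -> exists2 a, a != r & e = [set a; par a].
Proof.
move=> gE eE; have [x [y [-> xy]]] := graph_edgeP gE eE.
case/orP: (adj_rank_lt xy) => [xy_lt|yx_lt].
  by have [-> yr] := par_of_rank_lt xy xy_lt; exists y; rewrite // setUC.
have yx : adj E y x by rewrite adjC.
by have [-> xr] := par_of_rank_lt yx yx_lt; exists x.
Qed.

End RootedOrderTheory.

Definition pendant (U : finType) (E : {set {set U}}) (y q : U) := forall z, adj E y z -> z = q.

Lemma pendant_edge (U : finType) (E : {set {set U}}) y q e : is_graph E ->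
  pendant E y q -> e \in E -> y \in e -> e = [set y; q].
Proof.
move=> gE yq eE ye; have [a [b [eab ab]]] := graph_edgeP gE eE.
rewrite eab; move: ye; rewrite eab !inE => /orP[]/eqP ya; subst y; first by rewrite (yq b ab).
by rewrite (yq a) 1?setUC // adjC.
Qed.
Lemma exists_pendant_star (U : finType) (E : {set {set U}}) e0 : is_tree E -> e0 \in E ->
  exists q v w, [/\ adj E q v, pendant E v q, adj E q w &
                    forall y, adj E q y -> y != w -> pendant E y q].
Proof.
move=> tE e0E; have [gE _ _ _] := tE; have [a [b [_ ab]]] := graph_edgeP gE e0E.
have [rank [par ro]] := exists_rooted_order a tE.
pose is_parent p := [exists v, (v != a) && (par v == p)].
have parent_pb : is_parent (par b).
  by apply/existsP; exists b; rewrite eqxx andbT eq_sym; case/andP: ab.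
(* A parent [q] of maximal rank has only leaves as children. *)
case: (arg_maxnP rank parent_pb) => q /existsP[v /andP[va /eqP vq]] q_max.
have child_pendant y : y != a -> par y = q -> pendant E y q.
  move=> ya yq z yz; case/orP: (adj_rank_lt ro yz) => [yz_lt|]; last first.
    by move=> zy_lt; rewrite -yq (par_unique ro yz).
  have [yz_par za] := par_of_rank_lt ro yz yz_lt.
  have y_parent : is_parent y by apply/existsP; exists z; rewrite za -yz_par eqxx.
  have : rank y <= rank q := q_max y y_parent.
  by rewrite leqNgt -yq (rank_par ro ya).
have qv : adj E q v by rewrite adjC -vq (adj_par ro va).
exists q, v, (if q == a then v else par q); split => //; first exact: child_pendant.
  by case: eqP => [//|/eqP qa]; exact: (adj_par ro qa).
move=> y qy yw; case/orP: (adj_rank_lt ro qy) => [qy_lt|yq_lt].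
  by have [yq ya] := par_of_rank_lt ro qy qy_lt; apply: child_pendant.
have qa := neq_root_of_rank ro yq_lt; move: yw; rewrite (negbTE qa).
by rewrite -(par_unique ro qy yq_lt) eqxx.
Qed.

(** * Pieces of an optimal independent set *)

Lemma sigma_le_card (U : finType) (E : {set {set U}}) : sigma E <= #|E|.
Proof. by rewrite /sigma; elim/big_rec: _ => // J m _; apply: leq_trans (geq_minr _ _). Qed.

Lemma sigma_attained (U : finType) (E : {set {set U}}) : is_graph E ->
  exists2 J, independent E J & sigma E = #|J| + edges_outside E J.
Proof.
move=> gE; rewrite /sigma; elim/big_rec: _ => [|J m indJ [K indK ->]]; last first.
  by case: leqP => _; [exists J | exists K].
exists set0; last first.
  rewrite cards0 add0n /edges_outside; apply: eq_card => e.
  by rewrite inE disjoints_subset setC0 subsetT andbT.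
by apply/forallP => e; apply/implyP => eE; rewrite subset0 -cards_eq0 (gE _ eE).
Qed.

Section Pieces.
Variables (U : finType) (E : {set {set U}}) (I : {set U}).
Hypotheses (gE : is_graph E) (indI : independent E I).

Definition piece_of (e : {set U}) : {set U} :=
  if [pick u in e | u \in I] is Some u then [set u] else e.

Definition pieces : {set {set U}} :=
  [set [set u] | u in I] :|: [set e in E | [disjoint e & I]].

Lemma card_pieces : #|pieces| <= #|I| + edges_outside E I.
Proof. by rewrite (leq_trans (leq_card_setU _ _)) // leq_add2r leq_imset_card. Qed.

Lemma set1_piece u : u \in I -> [set u] \in pieces.
Proof. by move=> uI; rewrite inE imset_f. Qed.

Lemma edge_piece (e : {set U}) : e \in E -> [disjoint e & I] -> e \in pieces.
Proof. by move=> eE eI; rewrite !inE eE eI orbT. Qed.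

Lemma piece_of_disjoint (e : {set U}) : [disjoint e & I] -> piece_of e = e.
Proof.
rewrite /piece_of => eI; case: pickP => [u /andP[ue uI]|//].
by rewrite (disjointFr eI ue) in uI.
Qed.

Lemma piece_of_mem (e : {set U}) u : e \in E -> u \in e -> u \in I -> piece_of e = [set u].
Proof.
move=> eE ue uI; rewrite /piece_of.
case: pickP => [u' /andP[u'e u'I]|/(_ u)]; last by rewrite ue uI.
congr [set _]; apply/eqP/negPn/negP => u'u.
move/forallP: indI => /(_ e); rewrite eE (edge_eq_set2 gE eE u'e ue u'u).
by rewrite subUset !sub1set u'I uI.
Qed.

Variant piece_of_spec (e : {set U}) : {set U} -> Prop :=
  | PieceOfMem u of u \in e & u \in I : piece_of_spec e [set u]
  | PieceOfDisjoint of [disjoint e & I] : piece_of_spec e e.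

Lemma piece_ofP e : e \in E -> piece_of_spec e (piece_of e).
Proof.
move=> eE; have [eI|] := boolP [disjoint e & I]; first by rewrite piece_of_disjoint //; constructor.
case/pred0Pn => u /andP[ue uI]; rewrite (piece_of_mem eE ue uI); exact: PieceOfMem.
Qed.

Lemma piece_of_in_pieces e : e \in E -> piece_of e \in pieces.
Proof. by move=> eE; case: piece_ofP => // [u _ /set1_piece | /(edge_piece eE)]. Qed.

Lemma piece_of_inj e e' : e \in E -> e' \in E -> piece_of e = piece_of e' ->
  e = e' \/ exists2 u, u \in I & u \in e :&: e'.
Proof.
move=> eE e'E; case: piece_ofP => // [u ue uI|eI]; case: piece_ofP => // [u' u'e' u'I|e'I].
- by move/set1_inj => uu'; right; exists u; rewrite // inE ue uu'.
- by move=> ue'; rewrite -ue' in e'E; move: (edge_neq_set1 u gE e'E); rewrite eqxx.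
- by move=> eu'; rewrite eu' in eE; move: (edge_neq_set1 u' gE eE); rewrite eqxx.
by left.
Qed.

Lemma independent_adj x y : adj E x y -> x \in I -> y \notin I.
Proof.
move=> /adj_edge xyE xI; apply: contraT => /negbNE yI.
by move/forallP: indI => /(_ [set x; y]); rewrite xyE subUset !sub1set xI yI.
Qed.

End Pieces.

Definition side_consistent (U : finType) (E : {set {set U}}) (I : {set U}) (w : U)
    (side : {set U} -> bool) :=
  forall y e1 e2, y \notin I -> y != w -> e1 \in E -> e2 \in E -> y \in e1 -> y \in e2 ->
    side e1 = side e2.

Lemma exists_consistent_piece (U : finType) (E : {set {set U}}) (I : {set U}) e0 :
  is_tree E -> independent E I -> e0 \in E ->
  exists w0 P0, [/\ P0 \in pieces E I, w0 \notin I &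
                    side_consistent E I w0 (fun e => piece_of I e == P0)].
Proof.
move=> tE indI e0E; have [gE _ _ _] := tE.
suff [w0 [P0 [P0_piece w0I P0_unique]]] : exists w0 P0, [/\ P0 \in pieces E I, w0 \notin I &
    forall y e1 e2, y \notin I -> y != w0 -> e1 \in E -> e2 \in E -> y \in e1 -> y \in e2 ->
      piece_of I e1 = P0 -> e1 = e2].
  exists w0, P0; split => // y e1 e2 yI yw e1E e2E ye1 ye2.
  by apply/eqP/eqP => eP0; [rewrite -(P0_unique y e1 e2) | rewrite -(P0_unique y e2 e1)].
(* If q is in I, the piece {q} meets only leaves and w; otherwise the piece of the
   pendant edge qv meets only the leaf v and q. *)
have [q [v [w [qv vq qw star]]]] := exists_pendant_star tE e0E.
have [qI|qI] := boolP (q \in I).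
  exists w, [set q]; split; [exact: set1_piece | exact: (independent_adj indI qw qI) |].
  move=> y e1 e2 yI yw e1E e2E ye1 ye2.
  case: (piece_ofP gE indI e1E) => // [u ue1 _ /set1_inj uq | _ e1q]; last first.
    by rewrite e1q in e1E; move: (edge_neq_set1 q gE e1E); rewrite eqxx.
  have yq : y != q by apply: contraNneq yI => ->.
  have qe1 : q \in e1 by rewrite -uq.
  have qy : adj E q y by apply: adj_of_edge gE e1E qe1 ye1 _; rewrite eq_sym.
  have y_pendant := star y qy yw.
  by rewrite (pendant_edge gE y_pendant e1E ye1) (pendant_edge gE y_pendant e2E ye2).
have qvE : [set q; v] \in E by apply: adj_edge.
exists q, (piece_of I [set q; v]); split; [exact: piece_of_in_pieces | by [] |].
move=> y e1 e2 yI yq e1E e2E ye1 ye2 /(piece_of_inj gE indI e1E qvE) e1qv.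
have {e1qv} e1_qv : e1 = [set q; v].
  case: e1qv => [//|[u uI]]; rewrite !inE => /andP[ue1 /orP[]/eqP uqv].
    by move: uI; rewrite uqv (negbTE qI).
  by rewrite uqv in ue1; rewrite (pendant_edge gE vq e1E ue1) setUC.
move: ye1; rewrite e1_qv !inE (negbTE yq) /= => /eqP yv.
by rewrite yv in ye2; rewrite (pendant_edge gE vq e2E ye2) setUC.
Qed.

(** * Greedy construction of the expansion *)

Section GreedyExpansion.
Variables (U V : finType) (E : {set {set U}}) (H : {set {set V}}) (I : {set U}).
Variables (w0 : U) (rank : U -> nat) (par : U -> U).
Variables (G : bool -> {set {set V}}) (Vs : bool -> {set V}) (c : V).
Variables (side : {set U} -> bool) (cen : {set U} -> V).
Hypotheses (gE : is_graph E) (indI : independent E I) (w0I : w0 \notin I).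
Hypothesis ro : rooted_order E w0 rank par.
Hypothesis gG : forall b, is_graph (G b).
Hypothesis G_sub : forall b e, e \in G b -> e \subset Vs b.
Hypothesis G_deg : forall b v, v \in Vs b -> 2 * #|U| <= deg (G b) v.
Hypothesis c_in : forall b, c \in Vs b.
Hypothesis cen_out : forall X b, cen X \notin Vs b.
Hypothesis cen_inj : {in pieces E I &, injective cen}.
Hypothesis G_link : forall e, e \in E -> G (side e) \subset link H (cen (piece_of I e)).
Hypothesis side_ok : side_consistent E I w0 side.

Definition prefix n := [set x | rank x < n].

Definition prefix_edges n := [set e in E | e \subset prefix n].

Definition image n (phi : U -> V) (psi : {set U} -> V) :=
  phi @: prefix n :|: psi @: prefix_edges n.

Record partial_expansion n phi psi : Prop := {
  phi_inj : {in prefix n &, injective phi};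
  psi_inj : {in prefix_edges n &, injective psi};
  psi_neq_phi e x : e \in prefix_edges n -> x \in prefix n -> psi e != phi x;
  expanded_edge e : e \in prefix_edges n -> psi e |: phi @: e \in H;
  phi_centre x : x \in prefix n -> x \in I -> phi x = cen [set x];
  phi_side x e : x \in prefix n -> x \notin I -> e \in E -> x \in e -> phi x \in Vs (side e);
  phi_not_centre x X : x \in prefix n -> x \notin I -> phi x != cen X;
  psi_centre e : e \in prefix_edges n -> [disjoint e & I] -> psi e = cen e;
  psi_not_centre e X : e \in prefix_edges n -> ~~ [disjoint e & I] -> psi e != cen X }.

Lemma prefix_edge_in n e : e \in prefix_edges n -> e \in E.
Proof. by rewrite inE => /andP[]. Qed.

Lemma prefix_edges_sub n e : e \in prefix_edges n -> e \subset prefix n.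
Proof. by rewrite inE => /andP[]. Qed.

Lemma notin_image_neq n phi psi a : a \notin image n phi psi ->
  (forall y, y \in prefix n -> a != phi y) /\ (forall e, e \in prefix_edges n -> a != psi e).
Proof.
by move=> a_new; split=> [y|e] ? ; apply: contraNneq a_new => ->; rewrite inE imset_f ?orbT.
Qed.

Lemma prefixS n x : rank x = n -> forall y, (y \in prefix n.+1) = (y == x) || (y \in prefix n).
Proof.
move=> x_rank y; rewrite !inE ltnS leq_eqVlt -x_rank.
by rewrite (inj_eq (rank_inj ro)).
Qed.

Lemma prefix_edgesS n x : rank x = n -> x != w0 ->
  forall e, (e \in prefix_edges n.+1) = (e == [set x; par x]) || (e \in prefix_edges n).
Proof.
move=> x_rank xw e; have px := rank_par ro xw.
apply/idP/idP => [|/orP[/eqP->|]]; last first.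
- by rewrite !inE => /andP[-> /subsetP sub]; apply/subsetP => y /sub; rewrite !inE => /ltnW.
- rewrite !inE adj_edge ?(adj_par ro) //= subUset !sub1set !inE -x_rank ltnSn.
  by rewrite ltnS ltnW.
rewrite inE => /andP[eE]; have [a aw ->] := edge_par ro gE eE.
rewrite subUset !sub1set !(prefixS x_rank) !inE -x_rank => /andP[/orP[/eqP->|a_lt] _].
  by rewrite eqxx.
by rewrite adj_edge ?(adj_par ro) //= subUset !sub1set !inE a_lt (ltn_trans (rank_par ro aw)) ?orbT.
Qed.

Section Step.
Variables (n : nat) (phi : U -> V) (psi : {set U} -> V) (x : U).
Hypotheses (pe : partial_expansion n phi psi) (x_rank : rank x = n) (xw : x != w0).

Let xp := [set x; par x].

Lemma xp_edge : xp \in E.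
Proof. by rewrite adj_edge ?(adj_par ro). Qed.

Lemma x_new : x \notin prefix n.
Proof. by rewrite inE x_rank ltnn. Qed.

Lemma par_old : par x \in prefix n.
Proof. by rewrite inE -x_rank (rank_par ro xw). Qed.

Lemma xp_new e : e \in prefix_edges n -> x \notin e.
Proof. by move/prefix_edges_sub/subsetP => sub; apply: contra x_new; apply: sub. Qed.

Lemma x_in_xp : x \in xp.
Proof. by rewrite !inE eqxx. Qed.

Lemma par_in_xp : par x \in xp.
Proof. by rewrite !inE eqxx orbT. Qed.

Lemma prefix_neq_new y : y \in prefix n -> (y == x) = false.
Proof. by move=> y_old; apply: contraNF x_new => /eqP <-. Qed.

Lemma prefix_edges_neq_new e : e \in prefix_edges n -> (e == xp) = false.
Proof. by move=> /xp_new xe; apply: contraNF xe => /eqP->; apply: x_in_xp. Qed.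

Lemma extend_partial A B :
  A \notin image n phi psi -> B \notin image n phi psi -> B != A ->
  B |: [set A; phi (par x)] \in H ->
  (x \in I -> A = cen [set x]) -> (x \notin I -> A \in Vs (side xp)) ->
  ([disjoint xp & I] -> B = cen xp) -> (~~ [disjoint xp & I] -> B \in Vs (side xp)) ->
  partial_expansion n.+1 (fun y => if y == x then A else phi y)
                         (fun e => if e == xp then B else psi e).
Proof.
case: pe => phi_i psi_i psi_phi edgeH phi_c phi_s phi_nc psi_c psi_nc.
move=> /notin_image_neq[A_phi A_psi] /notin_image_neq[B_phi B_psi] BA BH A_c A_s B_c B_s.
have Vs_not_centre b a X : a \in Vs b -> a != cen X by move=> aV; apply: contraTneq aV => ->.
have x_sides e : x \notin I -> e \in E -> x \in e -> A \in Vs (side e).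
  by move=> xI eE xe; rewrite (side_ok xI xw eE xp_edge xe x_in_xp) A_s.
split=> [y z|e f|e y|e|y|y e|y X|e|e X]; rewrite ?(prefixS x_rank) ?(prefix_edgesS x_rank xw).
- case/orP=> [/eqP->|y_old] /orP[/eqP->|z_old] //; rewrite ?eqxx ?prefix_neq_new //.
  + by move/eqP; rewrite (negbTE (A_phi z z_old)).
  + by move/esym/eqP; rewrite (negbTE (A_phi y y_old)).
  exact: phi_i.
- case/orP=> [/eqP->|e_old] /orP[/eqP->|f_old] //; rewrite ?eqxx ?prefix_edges_neq_new //.
  + by move/eqP; rewrite (negbTE (B_psi f f_old)).
  + by move/esym/eqP; rewrite (negbTE (B_psi e e_old)).
  exact: psi_i.
- case/orP=> [/eqP->|e_old] /orP[/eqP->|y_old];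
    rewrite ?eqxx ?prefix_edges_neq_new ?prefix_neq_new //.
  + exact: B_phi.
  + by rewrite eq_sym A_psi.
  exact: psi_phi.
- case/orP=> [/eqP->|e_old]; rewrite ?eqxx.
    by rewrite imsetU1 imset_set1 eqxx prefix_neq_new ?par_old.
  rewrite prefix_edges_neq_new // (eq_in_imset (g := phi)); first exact: edgeH.
  by move=> y /(subsetP (prefix_edges_sub e_old)) y_old /=; rewrite prefix_neq_new.
- by case/orP=> [/eqP->|y_old]; rewrite ?eqxx ?prefix_neq_new //; apply: phi_c.
- by case/orP=> [/eqP->|y_old]; rewrite ?eqxx ?prefix_neq_new //; [apply: x_sides | apply: phi_s].
- case/orP=> [/eqP->|y_old]; rewrite ?eqxx ?prefix_neq_new //; last exact: phi_nc.
  by move=> xI; apply: Vs_not_centre (A_s xI).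
- by case/orP=> [/eqP->|e_old]; rewrite ?eqxx ?prefix_edges_neq_new //; apply: psi_c.
case/orP=> [/eqP->|e_old]; rewrite ?eqxx ?prefix_edges_neq_new //; last exact: psi_nc.
by move=> xpI; apply: Vs_not_centre (B_s xpI).
Qed.

Lemma card_image : #|image n phi psi|.+1 < 2 * #|U|.
Proof.
have card_prefix : #|prefix n| < #|U|.
  by rewrite -(cardsT U) proper_card // properT; apply: contraNneq x_new => ->; rewrite inE.
have edges_small : #|prefix_edges n| <= #|prefix n|.
  apply: leq_trans (leq_imset_card (fun y => [set y; par y]) _).
  apply/subset_leq_card/subsetP => e e_old; have := e_old; rewrite inE => /andP[eE /subsetP sub].
  have [a _ e_a] := edge_par ro gE eE; apply/imsetP; exists a => //.
  by apply: sub; rewrite e_a !inE eqxx.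
have image_small : #|image n phi psi| <= #|prefix n| + #|prefix n|.
  rewrite (leq_trans (leq_card_setU _ _)) // leq_add ?leq_imset_card //.
  exact: leq_trans (leq_imset_card _ _) edges_small.
rewrite mul2n -addnn; apply: leq_trans (leq_add card_prefix card_prefix).
by rewrite addSn addnS !ltnS.
Qed.

Lemma fresh_neighbour b v (X : {set V}) : v \in Vs b -> #|X| <= #|image n phi psi|.+1 ->
  exists2 a, a \notin X & [set v; a] \in G b.
Proof.
move=> vV X_small; apply: exists_fresh_neighbour => //.
by apply: leq_ltn_trans X_small (leq_trans card_image (G_deg vV)).
Qed.

Lemma neighbour_in b v a : [set v; a] \in G b -> a \in Vs b.
Proof. by move/G_sub/subsetP; apply; rewrite !inE eqxx orbT. Qed.

Lemma centre_new X : X \in pieces E I ->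
  (forall y, y \in prefix n -> y \in I -> [set y] != X) ->
  (forall e, e \in prefix_edges n -> [disjoint e & I] -> e != X) ->
  cen X \notin image n phi psi.
Proof.
move=> XP y_neq e_neq; rewrite inE negb_or; apply/andP; split.
  apply/imsetP=> - [y y_old /esym]; have [yI|yI] := boolP (y \in I).
    by rewrite (phi_centre pe y_old yI) => /(cen_inj (set1_piece E yI) XP) /eqP; apply/negP/y_neq.
  by move/eqP; rewrite (negbTE (phi_not_centre pe X y_old yI)).
apply/imsetP=> - [e e_old /esym]; have [eI|eI] := boolP [disjoint e & I].
  have eE := prefix_edge_in e_old.
  by rewrite (psi_centre pe e_old eI) => /(cen_inj (edge_piece eE eI) XP) /eqP; apply/negP/e_neq.
by move/eqP; rewrite (negbTE (psi_not_centre pe X e_old eI)).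
Qed.

Lemma step_vertex_in_I : x \in I -> exists phi' psi', partial_expansion n.+1 phi' psi'.
Proof.
move=> xI; have pI := independent_adj indI (adj_par ro xw) xI.
have pV := phi_side pe par_old pI xp_edge par_in_xp.
have [B B_new BG] := fresh_neighbour pV (leqnSn #|image n phi psi|).
have A_new : cen [set x] \notin image n phi psi.
  apply: centre_new; first exact: set1_piece.
    by move=> y y_old _; apply: contraNneq x_new => /set1_inj <-.
  by move=> e /prefix_edge_in eE _; apply: (edge_neq_set1 _ gE eE).
eexists; eexists; apply: (extend_partial A_new B_new) => //.
- by apply: contraTneq (neighbour_in BG) => ->; apply: cen_out.
- rewrite setUCA [[set B; _]]setUC -(piece_of_mem gE indI xp_edge x_in_xp xI).
  exact: link_triple (G_link xp_edge) BG.
- by rewrite xI.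
- by move/disjointFr/(_ x_in_xp); rewrite xI.
- by move=> _; apply: neighbour_in BG.
Qed.

Lemma step_parent_in_I : par x \in I -> exists phi' psi', partial_expansion n.+1 phi' psi'.
Proof.
move=> pI; have xI : x \notin I by apply: contraL pI; exact: (independent_adj indI (adj_par ro xw)).
have [A A_new AG] := fresh_neighbour (c_in (side xp)) (leqnSn #|image n phi psi|).
have A_card : #|A |: image n phi psi| <= #|image n phi psi|.+1 by rewrite cardsU1 A_new add1n.
have [B B_new BG] := fresh_neighbour (neighbour_in AG) A_card.
move: B_new; rewrite in_setU1 negb_or => /andP[BA B_new].
eexists; eexists; apply: (extend_partial A_new B_new) => //.
- rewrite (phi_centre pe par_old pI) [[set A; _]]setUC setUCA [[set B; A]]setUC.
  rewrite -(piece_of_mem gE indI xp_edge par_in_xp pI).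
  exact: link_triple (G_link xp_edge) BG.
- by rewrite (negbTE xI).
- by move=> _; apply: neighbour_in AG.
- by move/disjointFr/(_ par_in_xp); rewrite pI.
- by move=> _; apply: neighbour_in BG.
Qed.

Lemma step_outside_I : x \notin I -> par x \notin I ->
  exists phi' psi', partial_expansion n.+1 phi' psi'.
Proof.
move=> xI pI; have xpI : [disjoint xp & I].
  by rewrite disjoints_subset subUset !sub1set !inE xI pI.
have pV := phi_side pe par_old pI xp_edge par_in_xp.
have [A A_new AG] := fresh_neighbour pV (leqnSn #|image n phi psi|).
have B_new : cen xp \notin image n phi psi.
  apply: centre_new; first exact: edge_piece xp_edge xpI.
    by move=> y _ _; rewrite eq_sym; apply: edge_neq_set1 xp_edge.
  by move=> e /xp_new xe _; apply: contraNneq xe => ->; apply: x_in_xp.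
eexists; eexists; apply: (extend_partial A_new B_new) => //.
- by rewrite eq_sym; apply: contraTneq (neighbour_in AG) => ->; apply: cen_out.
- rewrite [[set A; _]]setUC -{1}(piece_of_disjoint xpI).
  exact: link_triple (G_link xp_edge) AG.
- by rewrite (negbTE xI).
- by move=> _; apply: neighbour_in AG.
by rewrite xpI.
Qed.

End Step.

Lemma partial_expansion_step n phi psi : 0 < n < #|U| -> partial_expansion n phi psi ->
  exists phi' psi', partial_expansion n.+1 phi' psi'.
Proof.
case/andP=> n_gt0 n_small pe; have [x x_rank] := rank_onto ro n_small.
have xw : x != w0 by apply: contraTneq n_gt0 => xw; rewrite -x_rank xw (rank_root ro).
have [xI|xI] := boolP (x \in I); first exact: (step_vertex_in_I pe x_rank xw xI).
have [pI|pI] := boolP (par x \in I); first exact: (step_parent_in_I pe x_rank xw pI).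
exact: (step_outside_I pe x_rank xw xI pI).
Qed.

Lemma prefix1 y : (y \in prefix 1) = (y == w0).
Proof. by rewrite inE ltnS leqn0 -(rank_root ro) (inj_eq (rank_inj ro)). Qed.

Lemma prefix_edges1 e : e \in prefix_edges 1 = false.
Proof.
apply/negbTE; rewrite inE; apply/andP => -[eE /subsetP sub].
have : e \subset [set w0] by apply/subsetP => y /sub; rewrite prefix1 inE.
by move/subset_leq_card; rewrite cards1 (gE eE).
Qed.

Lemma partial_expansion1 : partial_expansion 1 (fun _ => c) (fun _ => c).
Proof.
split=> [y z|e f|e y|e|y|y e|y X|e|e X]; rewrite ?prefix1 ?prefix_edges1 //.
- by move=> /eqP-> /eqP->.
- by move=> /eqP->; rewrite (negbTE w0I).
by move=> _ _; apply: contraTneq (c_in true) => ->.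
Qed.

Lemma greedy_expansion : contains_expansion E H.
Proof.
have U_gt0 : 0 < #|U| := leq_ltn_trans (leq0n _) (rank_lt_card ro w0).
have grow n : 0 < n <= #|U| -> exists phi psi, partial_expansion n phi psi.
  elim: n => [//|n IH] /andP[_ n_small]; have [->|n_gt0] := posnP n.
    by exists (fun _ => c), (fun _ => c); apply: partial_expansion1.
  have [phi [psi pe]] : exists phi psi, partial_expansion n phi psi.
    by apply: IH; rewrite n_gt0 ltnW.
  by apply: (partial_expansion_step _ pe); rewrite n_gt0.
have [phi [psi pe]] : exists phi psi, partial_expansion #|U| phi psi.
  by apply: grow; rewrite U_gt0 /=.
have all_prefix y : y \in prefix #|U| by rewrite inE (rank_lt_card ro).
have all_edges e : e \in E -> e \in prefix_edges #|U|.
  by move=> eE; rewrite inE eE; apply/subsetP => y _; apply: all_prefix.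
exists phi, psi; split.
- by move=> y z; apply: (phi_inj pe).
- by move=> e f /all_edges eP /all_edges fP; apply: (psi_inj pe).
- by move=> e /all_edges eP y; apply: (psi_neq_phi pe).
by move=> e /all_edges; apply: (expanded_edge pe).
Qed.

End GreedyExpansion.

Theorem proposition2p8 (U : finType) (E : {set {set U}}) (V : finType)
    (H : {set {set V}}) (S1 S2 V1 V2 : {set V}) (G1 G2 : {set {set V}}) :
  is_tree E ->
  is_3graph H ->
  (* S1, S2 are distinct t-subsets with t = sigma(T) - 1 *)
  #|S1| + 1 = sigma E -> #|S2| + 1 = sigma E -> S1 != S2 ->
  V1 \subset ~: (S1 :|: S2) -> V2 \subset ~: (S1 :|: S2) ->
  V1 :&: V2 != set0 ->
  (* G1 a graph on V1, G2 a graph on V2 *)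
  is_graph G1 -> (forall e, e \in G1 -> e \subset V1) ->
  is_graph G2 -> (forall e, e \in G2 -> e \subset V2) ->
  (forall v, v \in V1 -> 3 * #|U| <= deg G1 v) ->
  (forall v, v \in V2 -> 3 * #|U| <= deg G2 v) ->
  (forall v, v \in S1 -> G1 \subset link H v) ->
  (forall v, v \in S2 -> G2 \subset link H v) ->
  contains_expansion E H.
Proof.
move=> tE _ S1_card S2_card S12 V1S V2S V12 gG1 G1V gG2 G2V deg1 deg2 link1 link2.
have [gE _ _ _] := tE; have [I indI sigmaI] := sigma_attained gE.
have [s2 s2S2 s2S1] : exists2 s2, s2 \in S2 & s2 \notin S1.
  by apply: exists_notin_of_card => //; apply/eqP; rewrite -(eqn_add2r 1) S1_card S2_card.
have /set0Pn[c cV12] := V12.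
have /card_gt0P[e0 e0E] : 0 < #|E| by rewrite (leq_trans _ (sigma_le_card E)) // -S1_card addn1.
have [w0 [P0 [P0_piece w0I side_ok]]] := exists_consistent_piece tE indI e0E.
have pieces_small : #|pieces E I| <= #|S1|.+1 by rewrite -addn1 S1_card sigmaI card_pieces.
have [cen [cen_inj cenP0 cen_S1 cen_S]] := exists_inj_pinned P0_piece s2S1 pieces_small.
have [rank [par ro]] := exists_rooted_order w0 tE.
apply: (greedy_expansion (G := fun b => if b then G2 else G1) (Vs := fun b => if b then V2 else V1)
  (c := c) (side := fun e => piece_of I e == P0) gE indI w0I ro _ _ _ _ _ cen_inj _ side_ok).
- by case.
- by case.
- have two_le_three : 2 * #|U| <= 3 * #|U| := leq_mul (leqnSn 2) (leqnn _).
  by case=> v vV; apply: leq_trans two_le_three _; [apply: deg2 | apply: deg1].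
- by move: cV12; rewrite inE => /andP[cV1 cV2] [].
- have cen_in X : cen X \in S1 :|: S2.
    by move: (cen_S X); rewrite !inE => /orP[/eqP->|->]; rewrite ?s2S2 ?orbT.
  move=> X b; apply: contraL (cen_in X); rewrite -in_setC; apply/subsetP.
  by case: b.
move=> e eE; case: eqP => [->|/eqP eP0]; first by rewrite cenP0; apply: link2.
by apply/link1/cen_S1 => //; apply: piece_of_in_pieces.
Qed.
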